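(* Let $R$ be a discrete valuation ring with field of fractions $K$, uniformizer $\pi$ and residue field $k$. Let $A$ be an $R$-algebra with an $R$-linear involution $a\mapsto a^*$, let $V$ be a finite-dimensional $K$-vector space which is an $A$-module (via an $R$-bilinear map $A\times V\to V$) admitting a lattice $L$ with $A\cdot L\subset L$, and let $B$ be a nondegenerate $K$-bilinear form on $V$ with $B(ax,y)=B(x,a^*y)$ for all $a\in A$, $x,y\in V$, where either $B$ is alternating, or $B$ is symmetric and $\mathrm{char}(k)\neq2$. Then there exists a lattice $M$ of $V$ with $A\cdot M\subset M$ which is almost self-dual with respect to $B$.
   Context: A lattice of $V$ is a free $R$-submodule $M$ with $K\otimes_RM\to V$ an isomorphism; its dual is $M'=\{x\in V:B(x,y)\in R\ \forall y\in M\}$; $M$ is almost self-dual if $\pi M'\subset M\subset M'$. *)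

From HB Require Import structures.
From mathcomp Require Import all_boot all_order all_algebra.
Set Implicit Arguments. Unset Strict Implicit. Unset Printing Implicit Defensive.
Import GRing.Theory.
Local Open Scope ring_scope.

Definition DVR_with_uniformizer (R : idomainType) (pi : R) : Prop :=
  [/\ pi != 0, pi \isn't a GRing.unit &
      forall r : R, r != 0 -> exists (u : R) (n : nat),
        u \is a GRing.unit /\ r = u * pi ^+ n].

Definition fraction_field_of (R : idomainType) (K : fieldType)
    (iota : {rmorphism R -> K}) : Prop :=
  injective iota /\
  forall x : K, exists a b : R, b != 0 /\ x = iota a / iota b.

(* char(k) <> 2 for the residue field k = R / pi R, i.e. 2 is not in pi R. *)
Definition residue_char_neq2 (R : idomainType) (pi : R) : Prop :=
  ~ exists r : R, 2%:R = pi * r.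

Definition inR (R : idomainType) (K : fieldType) (iota : {rmorphism R -> K})
    (x : K) : Prop := exists r : R, x = iota r.

(* A lattice of V: a free R-submodule M such that K (x)_R M -> V is an
   isomorphism, i.e. the R-span of a K-basis of V. *)
Definition is_lattice (R : idomainType) (K : fieldType)
    (iota : {rmorphism R -> K}) (V : vectType K) (M : V -> Prop) : Prop :=
  exists b : (\dim (fullv : {vspace V})).-tuple V,
    basis_of fullv b /\
    forall x : V, M x <->
      exists c : 'I_(\dim (fullv : {vspace V})) -> R,
        x = \sum_i iota (c i) *: b`_i.

Definition dual_lattice (R : idomainType) (K : fieldType)
    (iota : {rmorphism R -> K}) (V : vectType K) (B : V -> V -> K)
    (M : V -> Prop) : V -> Prop :=
  fun x => forall y, M y -> inR iota (B x y).

Definition almost_self_dual (R : idomainType) (K : fieldType)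
    (iota : {rmorphism R -> K}) (pi : R) (V : vectType K) (B : V -> V -> K)
    (M : V -> Prop) : Prop :=
  (forall x, dual_lattice iota B M x -> M (iota pi *: x)) /\
  (forall x, M x -> dual_lattice iota B M x).

Definition stable_under (A V : Type) (act : A -> V -> V) (M : V -> Prop) : Prop :=
  forall (a : A) (x : V), M x -> M (act a x).

From HB Require Import structures.
From mathcomp Require Import all_boot all_order all_algebra.
From mathcomp Require Import ring.
From Stdlib Require Import Classical Wf_nat.
Set Implicit Arguments. Unset Strict Implicit. Unset Printing Implicit Defensive.
Import GRing.Theory.
Local Open Scope ring_scope.

(* If M is an A-stable R-submodule with M <= M' and pi^n M' <= M for some n >= 2, then
   M + pi^(n-1) M' is again A-stable (the dual of an A-stable module is A-stable, as B is
   adjoint for star), it is still contained in its dual because B is (anti)symmetric and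
   pi^(2n-2) = pi^(n-2) pi^n, and pi^(n-1) maps its dual, which lies in M', into it.
   Starting from a scaled copy pi^c L of the given lattice, which is integral and whose dual
   is bounded by the inverse Gram matrix, this descends to n <= 1, i.e. to an almost
   self-dual M. Since M lies between two lattices it is itself a lattice: choosing, for each
   coordinate k, an element of M supported on the first k+1 coordinates whose k-th
   coordinate has minimal valuation yields a triangular R-basis of M. *)

Lemma ex_least_nat (P : nat -> Prop) :
  (exists n, P n) -> exists n, P n /\ forall m, P m -> (n <= m)%N.
Proof.
move=> exP.
have [n [[Pn n_min] _]] :=
  dec_inh_nat_subset_has_unique_least_element P (fun n => classic (P n)) exP.
by exists n; split=> // m /n_min /leP.
Qed.

Section Integers.
Variables (R : idomainType) (pi : R) (K : fieldType) (iota : {rmorphism R -> K}).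

Lemma inR_iota r : inR iota (iota r). Proof. by exists r. Qed.

Lemma inR0 : inR iota 0. Proof. by exists 0; rewrite rmorph0. Qed.

Lemma inRD x y : inR iota x -> inR iota y -> inR iota (x + y).
Proof. by case=> r -> [s ->]; exists (r + s); rewrite rmorphD. Qed.

Lemma inRM x y : inR iota x -> inR iota y -> inR iota (x * y).
Proof. by case=> r -> [s ->]; exists (r * s); rewrite rmorphM. Qed.

Lemma inR_sum (I : Type) (r : seq I) (F : I -> K) :
  (forall i, inR iota (F i)) -> inR iota (\sum_(i <- r) F i).
Proof. by move=> FR; apply: (big_ind (inR iota)) => //; [exact: inR0 | exact: inRD]. Qed.

Lemma iota_unit_neq0 u : u \is a GRing.unit -> iota u != 0.
Proof. by move/(rmorph_unit iota); apply: contraTneq => ->; rewrite unitr0. Qed.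

Hypothesis pi_uniformizer : DVR_with_uniformizer pi.
Hypothesis K_fraction : fraction_field_of iota.

Lemma iota_pi_expn_neq0 d : iota (pi ^+ d) != 0.
Proof.
case: pi_uniformizer K_fraction => pi_neq0 _ _ [iota_inj _].
by rewrite rmorphXn expf_neq0 // -(rmorph0 iota) (inj_eq iota_inj).
Qed.

Lemma exists_pi_denominator (x : K) : exists d, inR iota (iota (pi ^+ d) * x).
Proof.
case: K_fraction => _ /(_ x) [r [s [s_neq0 ->]]].
case: pi_uniformizer => _ _ /(_ s s_neq0) [u [d [u_unit ->]]].
exists d; exists (r * u^-1).
have := iota_pi_expn_neq0 d; have := iota_unit_neq0 u_unit.
rewrite !rmorphM rmorphV // => u_neq0 pid_neq0.
by field; rewrite u_neq0 pid_neq0.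
Qed.

Lemma inR_pi_expnM_leq d e x : (d <= e)%N ->
  inR iota (iota (pi ^+ d) * x) -> inR iota (iota (pi ^+ e) * x).
Proof.
by move=> le_de; rewrite -(subnK le_de) exprD rmorphM -mulrA; apply: inRM (inR_iota _).
Qed.

Lemma exists_common_pi_denominator (I : finType) (f : I -> K) :
  exists d, forall i, inR iota (iota (pi ^+ d) * f i).
Proof.
have /fin_all_exists [D fD] := fun i => exists_pi_denominator (f i).
exists (\sum_i D i)%N => i; apply: inR_pi_expnM_leq (fD i).
by rewrite (bigD1 i) //= leq_addr.
Qed.

End Integers.

Section Submodules.
Variables (R : idomainType) (K : fieldType) (iota : {rmorphism R -> K}).
Variable V : vectType K.

Definition Rsubmodule (M : V -> Prop) :=
  [/\ M 0, forall x y, M x -> M y -> M (x + y)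
    & forall r x, M x -> M (iota r *: x)].

Lemma Rsubmodule_sum M (I : Type) (r : seq I) (F : I -> V) :
  Rsubmodule M -> (forall i, M (F i)) -> M (\sum_(i <- r) F i).
Proof. by case=> M0 MD _ MF; apply: (big_ind M). Qed.

Lemma Rsubmodule_sub M x y : Rsubmodule M -> M x -> M y -> M (x - y).
Proof.
case=> _ MD MZ Mx My; apply: MD => //.
by rewrite -scaleN1r -(rmorphN1 iota); apply: MZ.
Qed.

Definition scaleset (c : K) (M : V -> Prop) : V -> Prop :=
  fun x => exists2 m, M m & x = c *: m.

Lemma scaleset_Rsubmodule c M : Rsubmodule M -> Rsubmodule (scaleset c M).
Proof.
case=> M0 MD MZ; split.
- by exists 0; rewrite ?scaler0.
- by move=> _ _ [x Mx ->] [y My ->]; exists (x + y); rewrite ?scalerDr //; apply: MD.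
- move=> r _ [x Mx ->]; exists (iota r *: x); first exact: MZ.
  by rewrite !scalerA mulrC.
Qed.

Variables (n : nat) (b : n.-tuple V).

Definition Rspan : V -> Prop :=
  fun x => exists c : 'I_n -> R, x = \sum_i iota (c i) *: b`_i.

Lemma Rspan_Rsubmodule : Rsubmodule Rspan.
Proof.
split.
- by exists (fun=> 0); rewrite big1 // => i _; rewrite rmorph0 scale0r.
- move=> _ _ [c ->] [c' ->]; exists (fun i => c i + c' i); rewrite -big_split /=.
  by apply: eq_bigr => i _; rewrite rmorphD scalerDl.
- move=> r _ [c ->]; exists (fun i => r * c i); rewrite scaler_sumr.
  by apply: eq_bigr => i _; rewrite rmorphM scalerA.
Qed.

Hypothesis b_basis : basis_of fullv b.

Lemma Rspan_coord x : Rspan x <-> forall i, inR iota (coord b i x).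
Proof.
split=> [[c ->] i | x_coord].
  by rewrite coord_sum_free ?(basis_free b_basis) //; apply: inR_iota.
have /fin_all_exists [c c_def] := x_coord.
exists c; rewrite {1}(coord_basis b_basis (memvf x)).
by apply: eq_bigr => i _; rewrite c_def.
Qed.

Lemma Rspan_nth (i : 'I_n) : Rspan b`_i.
Proof.
apply/Rspan_coord => j; rewrite coord_free ?(basis_free b_basis) //.
by exists (i == j)%:R; rewrite rmorph_nat.
Qed.

End Submodules.

Section Forms.
Variables (R : idomainType) (pi : R) (K : fieldType) (iota : {rmorphism R -> K}).
Variables (V : vectType K) (B : V -> V -> K).
Hypothesis B_linearl : forall c x y z, B (c *: x + y) z = c * B x z + B y z.
Hypothesis B_linearr : forall c x y z, B x (c *: y + z) = c * B x y + B x z.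

Lemma form0l z : B 0 z = 0.
Proof.
have := B_linearl 1 0 0 z; rewrite scale1r addr0 mul1r => B0.
by apply: (addrI (B 0 z)); rewrite addr0 -B0.
Qed.

Lemma form0r z : B z 0 = 0.
Proof.
have := B_linearr 1 z 0 0; rewrite scale1r addr0 mul1r => B0.
by apply: (addrI (B z 0)); rewrite addr0 -B0.
Qed.

Lemma formZl c x z : B (c *: x) z = c * B x z.
Proof. by rewrite -[c *: x]addr0 B_linearl form0l addr0. Qed.

Lemma formZr c x z : B z (c *: x) = c * B z x.
Proof. by rewrite -[c *: x]addr0 B_linearr form0r addr0. Qed.

Lemma formDl x y z : B (x + y) z = B x z + B y z.
Proof. by rewrite -[x]scale1r B_linearl mul1r scale1r. Qed.

Lemma formDr x y z : B z (x + y) = B z x + B z y.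
Proof. by rewrite -[x]scale1r B_linearr mul1r scale1r. Qed.

Lemma form_suml (I : Type) (r : seq I) (F : I -> V) z :
  B (\sum_(i <- r) F i) z = \sum_(i <- r) B (F i) z.
Proof. exact: (big_morph (B^~ z) (fun x y => formDl x y z) (form0l z)). Qed.

Lemma form_sumr (I : Type) (r : seq I) (F : I -> V) z :
  B z (\sum_(i <- r) F i) = \sum_(i <- r) B z (F i).
Proof. exact: (big_morph (B z) (fun x y => formDr x y z) (form0r z)). Qed.

Lemma inR_form_swap : (forall x, B x x = 0) \/ (forall x y, B x y = B y x) ->
  forall x y, inR iota (B x y) -> inR iota (B y x).
Proof.
case=> [alt | sym] x y [r Bxy]; last by exists r; rewrite sym.
exists (- r); rewrite rmorphN -Bxy; apply/eqP; rewrite -addr_eq0.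
by have := alt (x + y); rewrite formDl !formDr !alt add0r addr0 addrC => ->.
Qed.

Definition is_integral (M : V -> Prop) := forall x, M x -> dual_lattice iota B M x.

Variables (n : nat) (b : n.-tuple V).
Hypothesis b_basis : basis_of fullv b.

Definition gram : 'M[K]_n := \matrix_(i, j) B b`_i b`_j.

Lemma form_gram x (j : 'I_n) : B x b`_j = ((\row_i coord b i x) *m gram) 0 j.
Proof.
rewrite {1}(coord_basis b_basis (memvf x)) form_suml !mxE.
by apply: eq_bigr => i _; rewrite formZl !mxE.
Qed.

Hypothesis B_nondeg : forall x, (forall y, B x y = 0) -> x = 0.

Lemma gram_unitmx : gram \in unitmx.
Proof.
rewrite -row_free_unit -kermx_eq0; apply/eqP/row_matrixP => i; rewrite row0.
set u := row i (kermx gram).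
have u_ker : u *m gram = 0 by apply/sub_kermxP; apply: row_sub.
pose x := \sum_l u 0 l *: b`_l.
have coord_x : \row_l coord b l x = u.
  by apply/rowP => l; rewrite mxE coord_sum_free // (basis_free b_basis).
have x0 : x = 0.
  apply: B_nondeg => y; rewrite (coord_basis b_basis (memvf y)) form_sumr.
  by rewrite big1 // => j _; rewrite formZr form_gram coord_x u_ker mxE mulr0.
by rewrite -coord_x x0; apply/rowP => l; rewrite !mxE linear0.
Qed.

Lemma coord_gram x (i : 'I_n) : coord b i x = \sum_(j < n) B x b`_j * invmx gram j i.
Proof.
have /(congr1 (fun v : 'rV_n => v 0 i)) := mulmxK gram_unitmx (\row_l coord b l x).
rewrite [in RHS]mxE => <-; rewrite mxE.
by apply: eq_bigr => j _; rewrite form_gram.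
Qed.

Hypothesis pi_uniformizer : DVR_with_uniformizer pi.
Hypothesis K_fraction : fraction_field_of iota.

Lemma exists_dual_basis_bound : exists d, forall x,
  (forall j : 'I_n, inR iota (B x b`_j)) -> Rspan iota b (iota (pi ^+ d) *: x).
Proof.
have [d inv_d] := exists_common_pi_denominator pi_uniformizer K_fraction
  (fun ji : 'I_n * 'I_n => invmx gram ji.1 ji.2).
exists d => x x_dual; apply/(Rspan_coord _ b_basis) => i.
rewrite linearZ /= coord_gram mulr_sumr; apply: inR_sum => j.
by rewrite mulrCA; apply: inRM => //; apply: (inv_d (j, i)).
Qed.

Lemma exists_integral_scaled_Rspan :
  exists c, is_integral (scaleset (iota (pi ^+ c)) (Rspan iota b)).
Proof.
have [c gram_c] := exists_common_pi_denominator pi_uniformizer K_fraction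
  (fun ij : 'I_n * 'I_n => B b`_ij.1 b`_ij.2).
exists c => _ [_ [r ->] ->] _ [_ [s ->] ->].
rewrite formZl formZr mulrA form_suml mulr_sumr; apply: inR_sum => i.
rewrite formZl form_sumr mulrCA mulr_sumr; apply: inRM; first exact: inR_iota.
apply: inR_sum => j; rewrite formZr mulrCA -mulrA.
do 2![apply: inRM; first exact: inR_iota].
exact: (gram_c (i, j)).
Qed.

Lemma exists_dual_scaled_Rspan_bound : exists d, forall c y,
  dual_lattice iota B (scaleset (iota (pi ^+ c)) (Rspan iota b)) y ->
  Rspan iota b (iota (pi ^+ (d + c)) *: y).
Proof.
have [d d_bound] := exists_dual_basis_bound.
exists d => c y y_dual; rewrite exprD rmorphM -scalerA; apply: d_bound => j.
rewrite formZl -formZr; apply: y_dual.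
by exists b`_j => //; apply: Rspan_nth.
Qed.

End Forms.

Section Descent.
Variables (R : idomainType) (pi : R) (K : fieldType) (iota : {rmorphism R -> K}).
Variables (A : Type) (star : A -> A) (V : vectType K) (act : A -> V -> V).
Variable B : V -> V -> K.
Hypothesis act_linear : forall r a x y, act a (iota r *: x + y) = iota r *: act a x + act a y.
Hypothesis B_linearl : forall c x y z, B (c *: x + y) z = c * B x z + B y z.
Hypothesis B_linearr : forall c x y z, B x (c *: y + z) = c * B x y + B x z.
Hypothesis B_adjoint : forall a x y, B (act a x) y = B x (act (star a) y).

Lemma act0 a : act a 0 = 0.
Proof.
have := act_linear 1 a 0 0; rewrite scaler0 addr0 rmorph1 scale1r => act00.
by apply: (addrI (act a 0)); rewrite addr0 -act00.
Qed.

Lemma actZ r a x : act a (iota r *: x) = iota r *: act a x.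
Proof. by rewrite -[_ *: x]addr0 act_linear act0 addr0. Qed.

Lemma actD a x y : act a (x + y) = act a x + act a y.
Proof. by have := act_linear 1 a x y; rewrite rmorph1 !scale1r. Qed.

Lemma scaleset_stable r M :
  stable_under act M -> stable_under act (scaleset (iota r) M).
Proof. by move=> M_st a _ [m Mm ->]; exists (act a m); rewrite ?actZ //; apply: M_st. Qed.

Local Notation dual := (dual_lattice iota B).

Lemma dual_Rsubmodule M : Rsubmodule iota (dual M).
Proof.
split=> [y _ | x z x_dual z_dual y My | r x x_dual y My].
- by rewrite (form0l B_linearl); apply: inR0.
- by rewrite (formDl B_linearl); apply: inRD; [apply: x_dual | apply: z_dual].
- by rewrite (formZl B_linearl); apply: inRM (inR_iota _ _) (x_dual _ My).
Qed.

Lemma dual_stable M : stable_under act M -> stable_under act (dual M).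
Proof. by move=> M_st a x x_dual y My; rewrite B_adjoint; apply/x_dual/M_st. Qed.

Lemma dual_antimono (M N : V -> Prop) :
  (forall x, M x -> N x) -> forall x, dual N x -> dual M x.
Proof. by move=> MN x x_dual y /MN; apply: x_dual. Qed.

Definition add_scaled_dual (q : R) (M : V -> Prop) : V -> Prop :=
  fun x => exists m y, [/\ M m, dual M y & x = m + iota q *: y].

Section AddScaledDual.
Variables (q : R) (M : V -> Prop).
Hypothesis M_submod : Rsubmodule iota M.

Lemma sub_add_scaled_dual x : M x -> add_scaled_dual q M x.
Proof.
have [dual0 _ _] := dual_Rsubmodule M.
by move=> Mx; exists x, 0; rewrite scaler0 addr0.
Qed.

Lemma add_scaled_dual_Rsubmodule : Rsubmodule iota (add_scaled_dual q M).
Proof.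
have [M0 MD MZ] := M_submod; have [dual0 dualD dualZ] := dual_Rsubmodule M.
split.
- exact: sub_add_scaled_dual.
- move=> _ _ [m1 [y1 [Mm1 y1_dual ->]]] [m2 [y2 [Mm2 y2_dual ->]]].
  by exists (m1 + m2), (y1 + y2); rewrite scalerDr addrACA; split; auto.
- move=> r _ [m [y [Mm y_dual ->]]]; exists (iota r *: m), (iota r *: y).
  by rewrite scalerDr !scalerA mulrC; split; auto.
Qed.

Lemma add_scaled_dual_stable :
  stable_under act M -> stable_under act (add_scaled_dual q M).
Proof.
move=> M_st a _ [m [y [Mm y_dual ->]]]; exists (act a m), (act a y).
by rewrite actD actZ; split=> //; [apply: M_st | apply: dual_stable].
Qed.

Lemma add_scaled_dual_bound y :
  dual (add_scaled_dual q M) y -> add_scaled_dual q M (iota q *: y).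
Proof.
have [M0 _ _] := M_submod.
move=> /(dual_antimono sub_add_scaled_dual) y_dual.
by exists 0, y; rewrite add0r.
Qed.

End AddScaledDual.

Hypothesis B_swap : forall x y, inR iota (B x y) -> inR iota (B y x).

Lemma add_scaled_dual_integral k M :
  is_integral iota B M -> (forall x, dual M x -> M (iota (pi ^+ k.+2) *: x)) ->
  is_integral iota B (add_scaled_dual (pi ^+ k.+1) M).
Proof.
move=> M_int M_bound _ [m1 [y1 [Mm1 y1_dual ->]]] _ [m2 [y2 [Mm2 y2_dual ->]]].
rewrite (formDl B_linearl) (formZl B_linearl) !(formDr B_linearr).
rewrite !(formZr B_linearr) mulrDr mulrA.
have -> : iota (pi ^+ k.+1) * iota (pi ^+ k.+1) = iota (pi ^+ k) * iota (pi ^+ k.+2).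
  by rewrite -!rmorphM -!exprD !addnS addSn.
rewrite -mulrA -(formZl B_linearl (iota (pi ^+ k.+2))).
apply: inRD; apply: inRD.
- exact: M_int.
- exact: inRM (inR_iota _ _) (B_swap (y2_dual _ Mm1)).
- exact: inRM (inR_iota _ _) (y1_dual _ Mm2).
- exact: inRM (inR_iota _ _) (B_swap (y2_dual _ (M_bound _ y1_dual))).
Qed.

Lemma exists_almost_self_dual_extension n M :
  Rsubmodule iota M -> stable_under act M -> is_integral iota B M ->
  (forall x, dual M x -> M (iota (pi ^+ n) *: x)) ->
  exists N, [/\ Rsubmodule iota N, stable_under act N,
    almost_self_dual iota pi B N & forall x, M x -> N x].
Proof.
elim: n M => [|[|k] IH] M M_submod M_st M_int M_bound.
- exists M; split=> //; split=> // x /M_bound; rewrite expr0 rmorph1 scale1r.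
  by have [_ _ MZ] := M_submod; apply: MZ.
- by exists M; split=> //; split=> // x /M_bound; rewrite expr1.
- have [N [N_submod N_st N_asd MN]] := IH (add_scaled_dual (pi ^+ k.+1) M)
    (add_scaled_dual_Rsubmodule _ M_submod)
    (add_scaled_dual_stable M_st)
    (add_scaled_dual_integral M_int M_bound) (add_scaled_dual_bound M_submod).
  by exists N; split=> // x /(sub_add_scaled_dual (pi ^+ k.+1))/MN.
Qed.

End Descent.

Section Sandwich.
Variables (R : idomainType) (pi : R) (K : fieldType) (iota : {rmorphism R -> K}).
Hypothesis pi_uniformizer : DVR_with_uniformizer pi.
Hypothesis K_fraction : fraction_field_of iota.
Variables (V : vectType K) (n : nat) (b : n.-tuple V) (N : V -> Prop) (a e : nat).
Hypothesis b_basis : basis_of fullv b.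
Hypothesis N_submod : Rsubmodule iota N.
Hypothesis N_lower : forall x, Rspan iota b x -> N (iota (pi ^+ a) *: x).
Hypothesis N_upper : forall x, N x -> Rspan iota b (iota (pi ^+ e) *: x).

Lemma inR_scaled_coord x (i : 'I_n) : N x -> inR iota (iota (pi ^+ e) * coord b i x).
Proof. by move=> /N_upper /(Rspan_coord _ b_basis) /(_ i); rewrite linearZ. Qed.

Definition pivot (k : 'I_n) (g : nat) (m : V) :=
  [/\ N m, forall j : 'I_n, (k < j)%N -> coord b j m = 0
    & iota (pi ^+ e) * coord b k m = iota (pi ^+ g)].

Definition min_pivot (k : 'I_n) (m : V) :=
  exists g, pivot k g m /\ forall g' m', pivot k g' m' -> (g <= g')%N.

Lemma exists_min_pivot k : exists m, min_pivot k m.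
Proof.
have [|g [[m m_piv] g_min]] := ex_least_nat (P := fun g => exists m, pivot k g m).
  have b_free := basis_free b_basis.
  exists (a + e)%N, (iota (pi ^+ a) *: b`_k); split.
  - exact/N_lower/Rspan_nth.
  - move=> j kj; rewrite linearZ /= coord_free // -val_eqE /=.
    by rewrite ltn_eqF // mulr0.
  - by rewrite linearZ /= coord_free // eqxx mulr1 -rmorphM -exprD addnC.
by exists m, g; split=> // g' m' m'_piv; apply: g_min; exists m'.
Qed.

Lemma min_pivot_reduce k m x : min_pivot k m -> N x ->
    (forall j : 'I_n, (k < j)%N -> coord b j x = 0) ->
  exists s : R, N (x - iota s *: m) /\
    forall j : 'I_n, (k <= j)%N -> coord b j (x - iota s *: m) = 0.
Proof.
case=> g [[Nm m_low m_k] g_min] Nx x_low.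
have [N0 _ NZ] := N_submod.
have low_k y : iota (pi ^+ e) * coord b k y = 0 ->
    (forall j : 'I_n, (k < j)%N -> coord b j y = 0) ->
    forall j : 'I_n, (k <= j)%N -> coord b j y = 0.
  move=> /eqP; rewrite mulf_eq0 (negPf (iota_pi_expn_neq0 _ _ _)) //= => /eqP y_k y_low j.
  by rewrite leq_eqVlt => /orP [/eqP/val_inj <- // | /y_low].
have [r x_k] := inR_scaled_coord k Nx.
have [r0 | r_neq0] := eqVneq r 0.
  exists 0; rewrite rmorph0 scale0r subr0; split=> //.
  by apply: low_k => //; rewrite x_k r0 rmorph0.
case: pi_uniformizer => _ _ /(_ r r_neq0) [u [g' [u_unit r_def]]].
have : pivot k g' (iota (u^-1) *: x).
  split; first exact: NZ _ _ Nx.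
  - by move=> j kj; rewrite linearZ /= x_low ?mulr0.
  - rewrite linearZ /= mulrCA x_k r_def rmorphM rmorphV // mulrA.
    by rewrite mulVf ?mul1r // iota_unit_neq0.
move=> /g_min le_gg'; exists (u * pi ^+ (g' - g)); split.
  exact: Rsubmodule_sub N_submod Nx (NZ _ _ Nm).
apply: low_k => [|j kj]; last by rewrite linearB linearZ /= x_low // m_low // mulr0 subr0.
rewrite linearB linearZ /= mulrBr mulrCA m_k x_k r_def -rmorphM -mulrA -exprD.
by rewrite subnK // subrr.
Qed.

Lemma Rspan_min_pivots (m : 'I_n -> V) : (forall k, min_pivot k (m k)) ->
  forall x, N x -> exists c : 'I_n -> R, x = \sum_i iota (c i) *: m i.
Proof.
move=> m_piv.
suff low_span k : (k <= n)%N -> forall x, N x ->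
    (forall j : 'I_n, (k <= j)%N -> coord b j x = 0) ->
    exists c : 'I_n -> R, x = \sum_i iota (c i) *: m i.
  by move=> x Nx; apply: (low_span n) => // j; rewrite leqNgt ltn_ord.
elim: k => [_ x _ x0 | k IH lt_kn x Nx x_low].
  exists (fun=> 0); rewrite big1 => [|i _]; last by rewrite rmorph0 scale0r.
  by rewrite (coord_basis b_basis (memvf x)) big1 // => i _; rewrite x0 ?scale0r.
pose k' := Ordinal lt_kn.
have [s [N_rest rest_low]] := min_pivot_reduce (m_piv k') Nx x_low.
have [c rest_def] := IH (ltnW lt_kn) _ N_rest rest_low.
exists (fun i => c i + (if i == k' then s else 0)).
rewrite -[x](subrK (iota s *: m k')) rest_def.
under [RHS]eq_bigr do rewrite rmorphD scalerDl.
rewrite big_split /=; congr (_ + _).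
rewrite (bigD1 k') //= eqxx big1 ?addr0 // => i /negPf ->.
by rewrite rmorph0 scale0r.
Qed.

Lemma sandwiched_Rsubmodule_lattice :
  exists m : n.-tuple V, basis_of fullv m /\ forall x, N x <-> Rspan iota m x.
Proof.
have /fin_all_exists [m m_piv] := exists_min_pivot.
pose T := [tuple m i | i < n].
have T_nth (i : 'I_n) : T`_i = m i by rewrite nth_mktuple.
have N_Rspan : forall x, N x <-> Rspan iota T x.
  move=> x; split=> [Nx | [c ->]].
    have [c ->] := Rspan_min_pivots m_piv Nx.
    by exists c; apply: eq_bigr => i _; rewrite T_nth.
  apply: Rsubmodule_sum N_submod _ => i; have [_ _ NZ] := N_submod.
  by apply: NZ; rewrite T_nth; have [g [[]]] := m_piv i.
exists T; split=> //.
rewrite basisEdim size_tuple (size_basis b_basis) leqnn andbT.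
rewrite -(span_basis b_basis); apply/span_subvP => v /(nthP 0) [i lt_in <-].
rewrite size_tuple in lt_in.
have [c bi_def] := (N_Rspan _).1 (N_lower (Rspan_nth iota b_basis (Ordinal lt_in))).
rewrite -[b`_i]scale1r -(mulVf (iota_pi_expn_neq0 pi_uniformizer K_fraction a)).
rewrite -scalerA [_ *: b`_i]bi_def; apply/memvZ/memv_suml => j _.
by apply/memvZ/memv_span/mem_nth; rewrite size_tuple.
Qed.

End Sandwich.

Theorem theorem5p2p1
  (R : idomainType) (pi : R) (K : fieldType) (iota : {rmorphism R -> K})
  (A : algType R) (star : A -> A) (V : vectType K) (act : A -> V -> V)
  (B : V -> V -> K) :
  DVR_with_uniformizer pi ->
  fraction_field_of iota ->
  (* a |-> a^* is an R-linear involution of the R-algebra A *)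
  (forall (r : R) (a b : A), star (r *: a + b) = r *: star a + star b) ->
  (forall a : A, star (star a) = a) ->
  (forall a b : A, star (a * b) = star b * star a) ->
  (* V is an A-module via an R-bilinear map A x V -> V *)
  (forall (r : R) (a b : A) (x : V),
      act (r *: a + b) x = iota r *: act a x + act b x) ->
  (forall (r : R) (a : A) (x y : V),
      act a (iota r *: x + y) = iota r *: act a x + act a y) ->
  (forall x : V, act 1 x = x) ->
  (forall (a b : A) (x : V), act (a * b) x = act a (act b x)) ->
  (* V admits an A-stable lattice *)
  (exists L : V -> Prop, is_lattice iota L /\ stable_under act L) ->
  (* B is a nondegenerate K-bilinear form compatible with the involution *)
  (forall (c : K) (x y z : V), B (c *: x + y) z = c * B x z + B y z) ->
  (forall (c : K) (x y z : V), B x (c *: y + z) = c * B x y + B x z) ->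
  (forall x : V, (forall y : V, B x y = 0) -> x = 0) ->
  (forall (a : A) (x y : V), B (act a x) y = B x (act (star a) y)) ->
  ((forall x : V, B x x = 0) \/
   ((forall x y : V, B x y = B y x) /\ residue_char_neq2 pi)) ->
  exists M : V -> Prop,
    [/\ is_lattice iota M, stable_under act M & almost_self_dual iota pi B M].
Proof.
move=> pi_unif K_frac _ _ _ _ act_linear _ _ [L [[b [b_basis L_Rspan]] L_st]].
move=> B_linearl B_linearr B_nondeg B_adjoint B_eps.
have B_swap : forall x y, inR iota (B x y) -> inR iota (B y x).
  by apply: inR_form_swap => //; case: B_eps => [|[]]; [left | right].
have b_st : stable_under act (Rspan iota b) by move=> a x /L_Rspan /(L_st a) /L_Rspan.
have [c M0_int] := exists_integral_scaled_Rspan B_linearl B_linearr b pi_unif K_frac.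
have [d M0_dual] :=
  exists_dual_scaled_Rspan_bound B_linearl B_linearr b_basis B_nondeg pi_unif K_frac.
set M0 := scaleset _ _ in M0_int.
have M0_bound y : dual_lattice iota B M0 y -> M0 (iota (pi ^+ (c + (d + c))) *: y).
  move=> /(M0_dual c) y_Rspan; exists (iota (pi ^+ (d + c)) *: y) => //.
  by rewrite scalerA -rmorphM -exprD.
have [N [N_submod N_st N_asd M0N]] := exists_almost_self_dual_extension
  act_linear B_linearl B_linearr B_adjoint B_swap
  (scaleset_Rsubmodule _ (Rspan_Rsubmodule iota b))
  (scaleset_stable act_linear b_st) M0_int M0_bound.
have N_lower x : Rspan iota b x -> N (iota (pi ^+ c) *: x).
  by move=> bx; apply: M0N; exists x.
have [_ N_int] := N_asd.
have N_upper x : N x -> Rspan iota b (iota (pi ^+ (d + c)) *: x).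
  by move=> /N_int /(dual_antimono M0N) /M0_dual.
have [m N_lattice] :=
  sandwiched_Rsubmodule_lattice pi_unif K_frac b_basis N_submod N_lower N_upper.
by exists N; split=> //; exists m.
Qed.
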